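(* Let $\mathcal{C}_f$ be a CRN stably computing $f:\mathbb{N}^d\to\mathbb{N}$ such that for every CRN $\mathcal{C}_g$ stably computing a function $g:\mathbb{N}\to\mathbb{N}$, the concatenated CRN $\mathcal{C}_{g\circ f}$ stably computes $g\circ f$. Then the CRN obtained from $\mathcal{C}_f$ by removing every reaction that has the output species of $\mathcal{C}_f$ as a reactant (which is output-oblivious) still stably computes $f$.
   Context: A chemical reaction network (CRN) is a pair $(\mathcal{S},\mathcal{R})$ of a finite set of species and a finite set of reactions $(\vec{R},\vec{P})\in\mathbb{N}^{\mathcal{S}}\times\mathbb{N}^{\mathcal{S}}$. A configuration is $\vec{C}\in\mathbb{N}^{\mathcal{S}}$; a reaction is applicable if $\vec{R}\le\vec{C}$ and yields $\vec{C}-\vec{R}+\vec{P}$; reachability is via finite sequences of applicable reactions. To compute $h:\mathbb{N}^k\to\mathbb{N}$ a CRN has input species $X_1,\ldots,X_k$, output species $Y$, leader species $L$; the initial configuration $\vec{I}_{\vec{x}}$ has $\vec{x}(i)$ copies of $X_i$, one $L$, nothing else. $\vec{C}$ is stable if all configurations reachable from it have the same count of $Y$. The CRN stably computes $h$ if for every $\vec{x}$ and every $\vec{C}$ reachable from $\vec{I}_{\vec{x}}$ some stable $\vec{O}$ reachable from $\vec{C}$ has $\vec{O}(Y)=h(\vec{x})$. A CRN is output-oblivious if its output species is never a reactant. The concatenated CRN $\mathcal{C}_{g\circ f}$ is obtained by taking the union of the species and reactions of $\mathcal{C}_f$ and $\mathcal{C}_g$, where the output species of $\mathcal{C}_f$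 is identified with the input species of $\mathcal{C}_g$ and all other species are disjoint; with leaders $L^f$, $L^g$ of $\mathcal{C}_f$, $\mathcal{C}_g$, a new leader $L$ and the reaction $L\to L^f+L^g$ are added. Its inputs are those of $\mathcal{C}_f$, its output is that of $\mathcal{C}_g$. *)

From Stdlib Require Import Relations List.
From mathcomp Require Import all_boot.

Unset Strict Implicit.
Unset Printing Implicit Defensive.

(* A reaction over a finite species type S: (reactant vector, product vector). *)
Definition reaction (S : finType) := ((S -> nat) * (S -> nat))%type.

Definition config (S : finType) := S -> nat.

Definition applicable {S : finType} (r : reaction S) (c : config S) : Prop :=
  forall s, r.1 s <= c s.

Definition step {S : finType} (R : seq (reaction S)) (c c' : config S) : Prop :=
  exists r, List.In r R /\ applicable r c /\ forall s, c' s = c s - r.1 s + r.2 s.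

Definition reachable {S : finType} (R : seq (reaction S)) : relation (config S) :=
  clos_refl_trans (config S) (step R).

Record fcrn (k : nat) := FCRN {
  species : finType;
  reactions : seq (reaction species);
  inputs : 'I_k -> species;
  output : species;
  leader : species }.
Arguments species {k}.
Arguments reactions {k}.
Arguments inputs {k}.
Arguments output {k}.
Arguments leader {k}.
Arguments FCRN {k}.

Definition well_formed {k} (C : fcrn k) : Prop :=
  injective (inputs C) /\
  (forall i, inputs C i <> leader C) /\
  (forall i, inputs C i <> output C) /\
  output C <> leader C.

Definition init_config k (C : fcrn k) (x : 'I_k -> nat) : config (species C) :=
  fun s => (\sum_(i < k | inputs C i == s) x i) + (s == leader C).

Definition stable {k} (C : fcrn k) (c : config (species C)) : Prop :=
  forall c', reachable (reactions C) c c' -> c' (output C) = c (output C).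

Definition stably_computes {k} (C : fcrn k) (h : ('I_k -> nat) -> nat) : Prop :=
  forall x c, reachable (reactions C) (init_config k C x) c ->
    exists o, reachable (reactions C) c o /\ stable C o /\ o (output C) = h x.

Definition output_oblivious {k} (C : fcrn k) : Prop :=
  forall r, List.In r (reactions C) -> r.1 (output C) = 0.

Definition remove_output_reactions {k} (C : fcrn k) : fcrn k :=
  FCRN (species C) [seq r <- reactions C | r.1 (output C) == 0]
        (inputs C) (output C) (leader C).

(* Concatenation C_{g o f}.  Species: a fresh leader (None), the species of
   C_f, and the species of C_g other than its input X^g, which is identified
   with the output Y^f of C_f. *)
Section Concat.
Variables (d : nat) (Cf : fcrn d) (Cg : fcrn 1).

Definition gsp := {s : species Cg | s != inputs Cg ord0}.
Definition cspecies : finType := option (species Cf + gsp)%type.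

Definition embf (s : species Cf) : cspecies := Some (inl s).
Definition embg (s : species Cg) : cspecies :=
  match (insub s : option gsp) with
  | Some s' => Some (inr s')
  | None => Some (inl (output Cf))
  end.

Definition pushv {A : finType} (e : A -> cspecies) (v : A -> nat) : cspecies -> nat :=
  fun t => \sum_(a | e a == t) v a.

Definition push_reaction {A : finType} (e : A -> cspecies) (r : reaction A)
  : reaction cspecies := (pushv e r.1, pushv e r.2).

Definition leader_reaction : reaction cspecies :=
  (fun t => nat_of_bool (t == None),
   fun t => nat_of_bool (t == embf (leader Cf)) + nat_of_bool (t == embg (leader Cg))).

Definition concat : fcrn d :=
  FCRN cspecies
    (map (push_reaction embf) (reactions Cf) ++
     map (push_reaction embg) (reactions Cg) ++ [:: leader_reaction])
    (fun i => embf (inputs Cf i)) (embg (output Cg)) None.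
End Concat.
Arguments concat {d}.

From Pilot Require Import Defs.
From Stdlib Require List.
From Stdlib Require Import Relations FunctionalExtensionality.
From mathcomp Require Import all_boot zify.

(* Concatenate C_f with [id_crn], the one-reaction CRN X -> Y computing the
   identity; by hypothesis the result stably computes f.  Its output is never
   consumed, so replaying a run of the pruned CRN in the concatenation and then
   converting every Y of C_f shows that the pruned CRN never holds more than
   f(x) copies of Y.  Conversely, folding the output of [id_crn] back into Y
   maps a run of the concatenation reaching f(x) to a run of the pruned CRN, up
   to the first reaction consuming Y; when that reaction fires the folded count
   of Y has strictly increased, so an induction on f(x) minus the count of Y
   shows that f(x) copies of Y stay reachable.  As the pruned CRN never
   consumes Y, those configurations are stable. *)

Set Implicit Arguments.
Unset Strict Implicit.
Unset Printing Implicit Defensive.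

Local Arguments rt_step {A R x y}.
Local Arguments rt_trans {A R x y z}.

Definition react {S : finType} (r : reaction S) (c : config S) : config S :=
  fun s => c s - r.1 s + r.2 s.

Lemma stepP {S : finType} (R : seq (reaction S)) c c' :
  step R c c' <-> exists2 r, List.In r R & applicable r c /\ c' = react r c.
Proof.
split=> [[r [inR [app_r E]]]|[r inR [app_r ->]]]; last by exists r.
by exists r => //; split=> //; apply: functional_extensionality.
Qed.

Lemma output_oblivious_monotone k (C : fcrn k) c c' :
  output_oblivious C -> reachable (reactions C) c c' -> c (output C) <= c' (output C).
Proof.
move=> oblC; elim=> [a b /stepP[r inR [_ ->]]|//|a b e _ le_ab _ le_be].
- by rewrite /react oblC // subn0 leq_addr.
- exact: leq_trans le_ab le_be.
Qed.

Lemma remove_output_reactions_oblivious k (C : fcrn k) :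
  output_oblivious (remove_output_reactions C).
Proof. by move=> r /List.filter_In[_ /eqP]. Qed.

Definition idX : 'I_3 := Ordinal (isT : 0 < 3).
Definition idY : 'I_3 := Ordinal (isT : 1 < 3).
Definition idL : 'I_3 := Ordinal (isT : 2 < 3).

Definition id_reaction : reaction 'I_3 :=
  (fun s => nat_of_bool (s == idX), fun s => nat_of_bool (s == idY)).

Definition id_crn : fcrn 1 := FCRN 'I_3 [:: id_reaction] (fun _ => idX) idY idL.

Lemma id_crn_well_formed : well_formed id_crn.
Proof.
split; first by move=> i j _; rewrite (ord1 i) (ord1 j).
by split; [|split] => //= *; move/(congr1 val).
Qed.

Lemma step_id_crn c c' : step (reactions id_crn) c c' ->
  0 < c idX /\ c' = react id_reaction c.
Proof. by case/stepP=> r [<-|//] [/(_ idX) app_r ->]. Qed.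

Lemma id_crn_stuck c c' : reachable (reactions id_crn) c c' -> c idX = 0 -> c' = c.
Proof.
elim=> [a b /step_id_crn[pos_a _] a0|//|a b e _ IHab _ IHbe a0].
- by rewrite a0 in pos_a.
- by rewrite IHbe IHab // IHab.
Qed.

Lemma id_crn_conserve c c' : reachable (reactions id_crn) c c' ->
  c' idX + c' idY = c idX + c idY.
Proof.
elim=> [a b /step_id_crn[pos_a ->]|//|a b e _ -> _ ->] //.
by rewrite /react /=; lia.
Qed.

Lemma id_crn_drain c : exists2 o, reachable (reactions id_crn) c o & o idX = 0.
Proof.
move En: (c idX) => n; elim: n c En => [|n IHn] c cX; first by exists c; [apply: rt_refl|].
have step_c : step (reactions id_crn) c (react id_reaction c).
  by apply/stepP; exists id_reaction; [left | split=> // s /=; case: eqP => [->|]; rewrite ?cX].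
have [o Ro oX] : exists2 o, reachable (reactions id_crn) (react id_reaction c) o & o idX = 0.
  by apply: IHn; rewrite /react /= cX subn1 addn0.
by exists o => //; apply: rt_trans (rt_step step_c) Ro.
Qed.

Lemma id_crn_computes : stably_computes id_crn (fun x => x ord0).
Proof.
move=> x c Rc; have [o Ro oX] := id_crn_drain c.
exists o; split=> //; split; first by move=> c' /id_crn_stuck ->.
have := id_crn_conserve (rt_trans Rc Ro).
by rewrite oX /init_config /= big_ord1 big_pred0 // !addn0.
Qed.

Section Embeddings.
Variables (d : nat) (Cf : fcrn d) (Cg : fcrn 1).
Local Notation T := (cspecies d Cf Cg).
Local Notation pushv := (Defs.pushv d Cf Cg).
Local Notation embf := (Defs.embf d Cf Cg).
Local Notation embg := (Defs.embg d Cf Cg).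

Lemma pushv_inj (A : finType) (e : A -> T) (v : A -> nat) a :
  injective e -> pushv e v (e a) = v a.
Proof.
move=> inj_e; rewrite /pushv (eq_bigl (pred1 a)) ?big_pred1_eq // => b.
by rewrite /= (inj_eq inj_e).
Qed.

Lemma pushv_out (A : finType) (e : A -> T) (v : A -> nat) t :
  (forall a, e a != t) -> pushv e v t = 0.
Proof. by move=> e_t; rewrite /pushv big_pred0 // => a; rewrite (negbTE (e_t a)). Qed.

Lemma embf_inj : injective embf.
Proof. by move=> a b [->]. Qed.

Lemma embg_val (s : gsp Cg) : embg (val s) = Some (inr s).
Proof. by rewrite /embg valK. Qed.

Lemma embg_input : embg (inputs Cg ord0) = Some (inl (output Cf)).
Proof. by rewrite /embg insubN ?negbK. Qed.

Lemma embg_inj : injective embg.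
Proof.
rewrite /embg => a b.
case: insubP => [u _ <-|/negPn/eqP ->]; case: insubP => [v _ <-|/negPn/eqP ->] //=.
by case=> ->.
Qed.

Lemma pushv_embf (v : species Cf -> nat) (t : T) :
  pushv embf v t = if t is Some (inl s) then v s else 0.
Proof.
case: t => [[s|s]|]; first exact: pushv_inj embf_inj.
all: by apply: pushv_out.
Qed.

Lemma pushv_embg (v : species Cg -> nat) (t : T) :
  pushv embg v t =
  match t with
  | Some (inl s) => if s == output Cf then v (inputs Cg ord0) else 0
  | Some (inr s) => v (val s)
  | None => 0
  end.
Proof.
case: t => [[s|s]|].
- case: eqP => [->|/eqP ne_sY]; first by rewrite -embg_input pushv_inj //; exact: embg_inj.
  apply: pushv_out => a; rewrite /embg; case: insubP => [u _ _|_] //.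
  by apply: contra ne_sY => /eqP[->].
- by rewrite -embg_val pushv_inj //; exact: embg_inj.
- by apply: pushv_out => a; rewrite /embg; case: insubP.
Qed.

End Embeddings.
Arguments embf_inj {d Cf Cg}.
Arguments embg_inj {d Cf Cg}.
Arguments embg_val {d Cf Cg}.

Section ConcatIdentity.
Variables (d : nat) (Cf : fcrn d).
Local Notation S := (species Cf).
Local Notation T := (cspecies d Cf id_crn).
Local Notation Yf := (output Cf).
Local Notation embf := (Defs.embf d Cf id_crn).
Local Notation embg := (Defs.embg d Cf id_crn).
Local Notation push_f := (push_reaction d Cf id_crn embf).
Local Notation push_id := (push_reaction d Cf id_crn embg id_reaction).
Local Notation CR := (reactions (concat Cf id_crn)).
Local Notation PR := (reactions (remove_output_reactions Cf)).

Definition idYg : gsp id_crn := exist _ idY isT.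
Definition idLg : gsp id_crn := exist _ idL isT.

(* The species of [id_crn] kept by the concatenation are its output and its
   leader. *)
Definition concat_config (c : config S) (k : nat) : config T := fun t =>
  match t with
  | Some (inl s) => c s
  | Some (inr s) => if val s == idY then k else 1
  | None => 0
  end.

Definition set_output (c : config S) (n : nat) : config S :=
  fun s => if s == Yf then n else c s.

Lemma concat_output : output (concat Cf id_crn) = Some (inr idYg).
Proof. exact: (embg_val idYg). Qed.

Lemma gsp_neq_idX (s : gsp id_crn) : (val s == idX) = false.
Proof. exact: negbTE (valP s). Qed.

Lemma applicable_push_f r c k : applicable (push_f r) (concat_config c k) <-> applicable r c.
Proof.
split=> [app_r s|app_r [[s|s]|]] /=; rewrite ?pushv_embf //.
by have := app_r (Some (inl s)); rewrite /= pushv_embf.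
Qed.

Lemma react_push_f r c k : react (push_f r) (concat_config c k) = concat_config (react r c) k.
Proof.
by apply: functional_extensionality => -[[s|s]|]; rewrite /react /= !pushv_embf ?subn0 ?addn0.
Qed.

Lemma applicable_push_id c k : applicable push_id (concat_config c k) <-> 0 < c Yf.
Proof.
split=> [app_id|pos_Y [[s|s]|]] /=; rewrite ?pushv_embg /= ?gsp_neq_idX //.
- by have := app_id (Some (inl Yf)); rewrite /= pushv_embg eqxx.
- by case: eqP => [->|].
Qed.

Lemma react_push_id c k : 0 < c Yf ->
  react push_id (concat_config c k) = concat_config (set_output c (c Yf).-1) k.+1.
Proof.
move=> pos_Y; apply: functional_extensionality => -[[s|s]|].
all: rewrite /react /set_output /= !pushv_embg /= ?gsp_neq_idX.
- by case: eqP => [->|_] /=; lia.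
- by case: ifP => _; lia.
- by [].
Qed.

Lemma concat_id_output_oblivious : output_oblivious (concat Cf id_crn).
Proof.
move=> r /List.in_app_iff[/List.in_map_iff[r0 [<- _]]|[<-|[<-|//]]].
- by rewrite concat_output /= pushv_embf.
- by rewrite concat_output /= pushv_embg.
- by rewrite concat_output.
Qed.

Lemma step_concat_config c k z : step CR (concat_config c k) z ->
  (exists2 r, List.In r (reactions Cf) & applicable r c /\ z = concat_config (react r c) k)
  \/ 0 < c Yf /\ z = concat_config (set_output c (c Yf).-1) k.+1.
Proof.
case/stepP=> r inR [app_r ->].
move/List.in_app_iff: inR => [/List.in_map_iff[r0 [Er inR0]]|[Er|[Er|//]]]; subst r.
- by left; exists r0 => //; rewrite react_push_f -(applicable_push_f _ _ k).
- right; have pos_Y : 0 < c Yf by apply/(applicable_push_id c k).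
  by rewrite react_push_id.
- by have := app_r None.
Qed.

Lemma step_concat_f r c k : List.In r (reactions Cf) -> applicable r c ->
  step CR (concat_config c k) (concat_config (react r c) k).
Proof.
move=> inR app_r; apply/stepP; exists (push_f r); last by rewrite react_push_f applicable_push_f.
by apply/List.in_app_iff; left; apply/List.in_map_iff; exists r.
Qed.

Lemma step_concat_id c k : 0 < c Yf ->
  step CR (concat_config c k) (concat_config (set_output c (c Yf).-1) k.+1).
Proof.
move=> pos_Y; apply/stepP; exists push_id; last by rewrite react_push_id ?applicable_push_id.
by apply/List.in_app_iff; right; left.
Qed.

Lemma step_concat_leader x :
  step CR (init_config d (concat Cf id_crn) x) (concat_config (init_config d Cf x) 0).
Proof.
apply/stepP; exists (leader_reaction d Cf id_crn).
  by apply/List.in_app_iff; right; right; left.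
split; first by move=> t; apply: leq_addl.
apply: functional_extensionality => -[[s|s]|].
all: rewrite /react /init_config /= (embg_val idLg).
- rewrite -[Some (inl s)]/(embf s) (inj_eq embf_inj) !addn0 subn0.
  by congr (_ + _); apply: eq_bigl => i; rewrite (inj_eq embf_inj).
- by rewrite big_pred0 //; case: s => -[[|[|[|n]]] ?] ?.
- by rewrite big_pred0.
Qed.

Lemma reachable_concat_pruned c c' k :
  reachable PR c c' -> reachable CR (concat_config c k) (concat_config c' k).
Proof.
elim=> [a b /stepP[r /List.filter_In[inR _] [app_r ->]]|a|a b e _ IHab _ IHbe].
- exact/rt_step/step_concat_f.
- exact: rt_refl.
- exact: rt_trans IHab IHbe.
Qed.

Lemma reachable_concat_convert c k :
  reachable CR (concat_config c k) (concat_config (set_output c 0) (k + c Yf)).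
Proof.
move En: (c Yf) => n; elim: n c k En => [|n IHn] c k cY.
  have -> : set_output c 0 = c.
    by apply: functional_extensionality => s; rewrite /set_output; case: eqP => [->|].
  by rewrite addn0; apply: rt_refl.
have pos_Y : 0 < c Yf by rewrite cY.
apply: rt_trans (rt_step (step_concat_id k pos_Y)) _.
have -> : set_output c 0 = set_output (set_output c (c Yf).-1) 0.
  by apply: functional_extensionality => s; rewrite /set_output; case: eqP.
by rewrite -addSnnS; apply: IHn; rewrite /set_output eqxx cY.
Qed.

Definition fold_output (c : config S) (k : nat) : config S := set_output c (c Yf + k).

Lemma step_fold_output r c k : List.In r (reactions Cf) -> applicable r c -> r.1 Yf = 0 ->
  step PR (fold_output c k) (fold_output (react r c) k).
Proof.
move=> inR app_r r0; apply/stepP; exists r; first by apply/List.filter_In; rewrite r0.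
split=> [s|]; first by rewrite /fold_output /set_output; case: eqP => [->|]; rewrite ?r0.
apply: functional_extensionality => s; rewrite /react /fold_output /set_output.
by case: eqP => [->|//]; rewrite r0 !subn0 addnAC.
Qed.

Lemma concat_run_fold c k o : reachable CR (concat_config c k) o ->
  exists2 q, reachable PR (fold_output c k) q &
    k < q Yf \/ o (output (concat Cf id_crn)) <= q Yf.
Proof.
move/clos_rt_rt1n_iff; move Ez: (concat_config c k) => z run.
elim: run c k Ez => [z0|z0 z1 z2 step_z01 _ IH] c k Ez; subst z0.
  exists (fold_output c k); first exact: rt_refl.
  by right; rewrite concat_output /fold_output /set_output /= !eqxx leq_addl.
case: (step_concat_config step_z01) => [[r inR [app_r E]]|[pos_Y E]].
- case: (posnP (r.1 Yf)) => [r0|pos_r].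
    have [q Rq] := IH _ _ (esym E).
    by exists q => //; apply: rt_trans (rt_step (step_fold_output k inR app_r r0)) Rq.
  exists (fold_output c k); first exact: rt_refl.
  by left; rewrite /fold_output /set_output eqxx; have := app_r Yf; lia.
- have [q Rq bound] := IH _ _ (esym E); exists q.
    suff -> : fold_output c k = fold_output (set_output c (c Yf).-1) k.+1 by [].
    apply: functional_extensionality => s; rewrite /fold_output /set_output eqxx.
    by case: eqP => // _; lia.
  by case: bound => [/ltnW|]; [left|right].
Qed.

End ConcatIdentity.

Section PrunedComputes.
Variables (d : nat) (Cf : fcrn d) (f : ('I_d -> nat) -> nat) (x : 'I_d -> nat).
Hypothesis concat_computes : stably_computes (concat Cf id_crn) f.
Local Notation S := (species Cf).
Local Notation Yf := (output Cf).
Local Notation PR := (reactions (remove_output_reactions Cf)).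
Local Notation init := (init_config d Cf x).

Lemma concat_reaches_pruned (p : config S) : reachable PR init p ->
  reachable (reactions (concat Cf id_crn)) (init_config d (concat Cf id_crn) x)
    (concat_config (set_output p 0) (p Yf)).
Proof.
move=> Rp; rewrite -[p Yf]add0n; apply: rt_trans (rt_step (step_concat_leader Cf x)) _.
exact: rt_trans (reachable_concat_pruned 0 Rp) (reachable_concat_convert p 0).
Qed.

Lemma pruned_output_le (p : config S) : reachable PR init p -> p Yf <= f x.
Proof.
move=> Rp; have [o [Ro [_ <-]]] := concat_computes (concat_reaches_pruned Rp).
have := output_oblivious_monotone (concat_id_output_oblivious (Cf := Cf)) Ro.
by rewrite concat_output.
Qed.

Lemma pruned_output_reaches (p : config S) :
  reachable PR init p -> exists2 e, reachable PR p e & e Yf = f x.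
Proof.
have [n lt_pn] := ubnP (f x - p Yf); elim: n p lt_pn => // n IHn p lt_pn Rp.
have [o [Ro [_ o_fx]]] := concat_computes (concat_reaches_pruned Rp).
have fold_p : fold_output (set_output p 0) (p Yf) = p.
  apply: functional_extensionality => s.
  by rewrite /fold_output /set_output eqxx; case: eqP => [->|].
have [q] := concat_run_fold Ro; rewrite fold_p o_fx => Rq [lt_pq|fx_le_q].
- have q_le_fx := pruned_output_le (rt_trans Rp Rq).
  have [e Re e_fx] := IHn q (ltac:(lia)) (rt_trans Rp Rq).
  by exists e => //; apply: rt_trans Rq Re.
- exists q => //; apply/eqP; rewrite eqn_leq fx_le_q andbT.
  exact: pruned_output_le (rt_trans Rp Rq).
Qed.

End PrunedComputes.

Theorem lemma3 (d : nat) (Cf : fcrn d) (f : ('I_d -> nat) -> nat) :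
  well_formed Cf ->
  stably_computes Cf f ->
  (forall (Cg : fcrn 1) (g : nat -> nat),
      well_formed Cg ->
      stably_computes Cg (fun x => g (x ord0)) ->
      stably_computes (concat Cf Cg) (fun x => g (f x))) ->
  output_oblivious (remove_output_reactions Cf) /\
  stably_computes (remove_output_reactions Cf) f.
Proof.
move=> _ _ concat_computes.
have concat_id_computes : stably_computes (concat Cf id_crn) f :=
  concat_computes id_crn id id_crn_well_formed id_crn_computes.
split=> [|x c Rc]; first exact: remove_output_reactions_oblivious.
have [e Re e_fx] := pruned_output_reaches concat_id_computes Rc.
exists e; split=> //; split=> // e' Re'; apply/eqP; rewrite eqn_leq.
rewrite (output_oblivious_monotone (remove_output_reactions_oblivious (C := Cf)) Re') andbT.
by rewrite e_fx (pruned_output_le concat_id_computes (rt_trans Rc (rt_trans Re Re'))).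
Qed.
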